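(* Let $V$ be a complex vector space of dimension $r+1$ and let $\underline{d}=(d_1,\ldots,d_s)$ be a sequence of integers $\geq 2$. Let $W=\operatorname{Sym}^{d_1}V\oplus\cdots\oplus\operatorname{Sym}^{d_s}V$. For any integer $s'\geq 0$ and any $1\leq k\leq r$, let $t$ be an integer with $$0<t<\left[\binom{\underline{d}+r}{r}-\binom{\underline{d}+r-k}{r-k}\right]-ks'.$$ Then for every irreducible $\mathrm{GL}(V)$-summand $\Gamma^\lambda V$ of $\wedge^tW$ we have $\lambda_k<\binom{\underline{d}+r}{r+1}-s'$.
   Context: For integers $a,b$, $\binom{\underline{d}+a}{b}$ means $\sum_{i=1}^s\binom{d_i+a}{b}$. $\Gamma^\lambda V$ denotes the irreducible $\mathrm{GL}(V)$-module with highest weight the partition $\lambda=(\lambda_1\ge\cdots\ge\lambda_{r+1})$. *)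

From mathcomp Require Import all_boot all_order all_algebra all_fingroup all_field.
Set Implicit Arguments. Unset Strict Implicit. Unset Printing Implicit Defensive.
Import Order.TTheory GRing.Theory Num.Theory.

(* V = C^{r+1} with basis x_0, ..., x_r.
   Monomials of degree D in r+1 variables: the standard basis of Sym^D V. *)
Definition Mon (r D : nat) :=
  {a : {ffun 'I_r.+1 -> 'I_D.+1} | \sum_(j < r.+1) (a j : nat) == D}.

(* Basis of W = Sym^{d_1} V (+) ... (+) Sym^{d_s} V : pairs (summand i, monomial). *)
Definition WBasis (r : nat) (d : seq nat) :=
  {i : 'I_(size d) & Mon r (nth 0 d i)}.

Definition expo (r : nat) (d : seq nat) (b : WBasis r d) (j : 'I_r.+1) : nat :=
  (val (projT2 b)) j.

Local Open Scope ring_scope.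

(* Matrix of the elementary endomorphism E_{pq} of V (E_{pq} x_q = x_p), acting on W
   by derivations: E_{pq} x^a = a_q x^{a - e_q + e_p}.
   gl_W p q c b = coefficient of the basis vector c in E_{pq} b. *)
Definition gl_W (r : nat) (d : seq nat) (p q : 'I_r.+1) (c b : WBasis r d) : algC :=
  if (tag c == tag b) &&
     [forall j : 'I_r.+1, expo c j + (q == j) == expo b j + (p == j)]%N
  then (expo b q)%:R else 0.

(* Elements of the t-th tensor power of W, as functions on t-tuples of basis vectors
   (coefficient functions). wedge^t W is the subspace of alternating tensors. *)
Definition tensorW (r : nat) (d : seq nat) (t : nat) :=
  {ffun 'I_t -> WBasis r d} -> algC.

Definition alternating (r : nat) (d : seq nat) (t : nat) (T : tensorW r d t) : Prop :=
  forall (c : {ffun 'I_t -> WBasis r d}) (m1 m2 : 'I_t), m1 != m2 ->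
    T [ffun m => c (tperm m1 m2 m)] = - T c.

Definition gl_act (r : nat) (d : seq nat) (t : nat) (p q : 'I_r.+1)
    (T : tensorW r d t) : tensorW r d t :=
  fun c => \sum_(m < t) \sum_(b : WBasis r d)
             gl_W p q (c m) b * T [ffun m' => if m' == m then b else c m'].

Definition highest_weight_vector (r : nat) (d : seq nat) (t : nat)
    (lam : 'I_r.+1 -> nat) (T : tensorW r d t) : Prop :=
  [/\ alternating T,
      exists c, T c != 0,
      forall (p : 'I_r.+1) c, gl_act p p T c = (lam p)%:R * T c &
      forall (p q : 'I_r.+1) c, (p < q)%N -> gl_act p q T c = 0].

(* Gamma^lam V is an irreducible GL(V)-summand of wedge^t W
   iff wedge^t W contains a highest weight vector of weight lam. *)
Definition is_summand_wedge (r : nat) (d : seq nat) (t : nat) (lam : 'I_r.+1 -> nat)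
  : Prop := exists T : tensorW r d t, highest_weight_vector lam T.

From mathcomp Require Import all_boot all_order all_algebra all_fingroup all_field.
From mathcomp Require Import zify ring.
Import Order.TTheory GRing.Theory Num.Theory.
Set Implicit Arguments. Unset Strict Implicit. Unset Printing Implicit Defensive.

(* E_jj acts on a pure tensor e_(b_1) (x) ... (x) e_(b_t) by the total x_j-degree
   of b_1, ..., b_t, so every tuple in the support of a highest weight vector has
   weight lam; as the vector is alternating, such a tuple consists of t distinct
   monomials whose x_j-exponents add up to lam_j.  The sl_2 argument for E_pq, E_qp
   shows lam_1 >= ... >= lam_(r+1).  The x_j-exponents of all basis monomials of W
   add up to N = C(d+r, r+1).  If lam_k >= N - s', then for every j <= k the
   monomials outside the support tuple have total x_j-exponent at most s', so at
   most k s' of them involve one of x_1, ..., x_k; at most C(d+r-k, r-k) monomials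
   involve none of them and t lie in the tuple, hence
   dim W <= C(d+r-k, r-k) + t + k s', contradicting the bound on t. *)

Local Open Scope ring_scope.

Section TensorAction.

Variables (R : comPzRingType) (B : finType) (t : nat).
Implicit Types (c : {ffun 'I_t -> B}) (m : 'I_t) (b : B) (X Y : B -> B -> R).
Implicit Types (T U : {ffun 'I_t -> B} -> R).

Definition upd c m b : {ffun 'I_t -> B} := [ffun m' => if m' == m then b else c m'].

Lemma upd_same c m b : upd c m b m = b.
Proof. by rewrite ffunE eqxx. Qed.

Lemma upd_other c m b m' : m' != m -> upd c m b m' = c m'.
Proof. by move=> /negbTE ne; rewrite ffunE ne. Qed.

Lemma upd_upd c m b b' : upd (upd c m b) m b' = upd c m b'.
Proof. by apply/ffunP=> i; rewrite !ffunE; case: eqP. Qed.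

Lemma upd_comm c m b m' b' : m' != m ->
  upd (upd c m b) m' b' = upd (upd c m' b') m b.
Proof.
move=> ne; apply/ffunP=> i; rewrite !ffunE.
by case: (eqVneq i m') => [->|//]; rewrite (negbTE ne).
Qed.

Lemma upd_id c m : upd c m (c m) = c.
Proof. by apply/ffunP=> i; rewrite !ffunE; case: eqP => // ->. Qed.

Definition tensor_act X T : {ffun 'I_t -> B} -> R :=
  fun c => \sum_m \sum_b X (c m) b * T (upd c m b).

Lemma eq_tensor_act X Y T U :
  (forall x y, X x y = Y x y) -> (forall c, T c = U c) ->
  forall c, tensor_act X T c = tensor_act Y U c.
Proof.
by move=> eXY eTU c; apply: eq_bigr => m _; apply: eq_bigr => b _; rewrite eXY eTU.
Qed.

Lemma tensor_actZ X (a : R) T c :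
  tensor_act X (fun c => a * T c) c = a * tensor_act X T c.
Proof.
rewrite /tensor_act mulr_sumr; apply: eq_bigr => m _; rewrite mulr_sumr.
by apply: eq_bigr => b _; rewrite mulrCA.
Qed.

Lemma tensor_act0 X T : (forall c, T c = 0) -> forall c, tensor_act X T c = 0.
Proof. by move=> T0 c; apply: big1 => m _; apply: big1 => b _; rewrite T0 mulr0. Qed.

Lemma tensor_act_neq0 X T c : tensor_act X T c != 0 ->
  exists m b, X (c m) b != 0 /\ T (upd c m b) != 0.
Proof.
move=> nz; pose P (mb : 'I_t * B) := (X (c mb.1) mb.2 != 0) && (T (upd c mb.1 mb.2) != 0).
case: (pickP P) => [[m b] /andP[nzX nzT]|no_term]; first by exists m, b.
case/eqP: nz; apply: big1 => m _; apply: big1 => b _.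
by case/nandP: (no_term (m, b)) => /negPn/eqP ->; rewrite ?mul0r ?mulr0.
Qed.

Lemma tensor_act_diag (f : B -> R) T c :
  tensor_act (fun x y => if x == y then f x else 0) T c = (\sum_m f (c m)) * T c.
Proof.
rewrite /tensor_act mulr_suml; apply: eq_bigr => m _.
rewrite (bigD1 (c m)) //= eqxx upd_id big1 ?addr0 // => b.
by rewrite eq_sym => /negbTE ->; rewrite mul0r.
Qed.

(* The action is a Lie algebra morphism: in [X (Y T) - Y (X T)] the terms where
   X and Y hit different tensor factors cancel, leaving the action of [XY - YX]. *)
Lemma tensor_act_commutator X Y T c :
  tensor_act X (tensor_act Y T) c - tensor_act Y (tensor_act X T) c =
  tensor_act (fun x y => \sum_b (X x b * Y b y - Y x b * X b y)) T c.
Proof.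
pose G X Y m m' :=
  \sum_b \sum_b' X (c m) b * (Y (upd c m b m') b' * T (upd (upd c m b) m' b')).
have actG X' Y' : tensor_act X' (tensor_act Y' T) c = \sum_m \sum_m' G X' Y' m m'.
  rewrite /tensor_act; apply: eq_bigr => m _; rewrite /G exchange_big /=.
  apply: eq_bigr => b _; rewrite mulr_sumr; apply: eq_bigr => m' _.
  by rewrite mulr_sumr.
have G_diag X' Y' m :
    G X' Y' m m = \sum_b' (\sum_b X' (c m) b * Y' b b') * T (upd c m b').
  rewrite /G exchange_big; apply: eq_bigr => b' _; rewrite mulr_suml.
  by apply: eq_bigr => b _; rewrite upd_same upd_upd mulrA.
have G_offdiag m m' : m' != m -> G X Y m m' = G Y X m' m.
  move=> ne; rewrite /G exchange_big; apply: eq_bigr => b' _; apply: eq_bigr => b _.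
  by rewrite upd_other // upd_other 1?eq_sym // upd_comm // !mulrA [X _ _ * _]mulrC.
have split_diag X' Y' : \sum_m \sum_m' G X' Y' m m' =
    \sum_m G X' Y' m m + \sum_m \sum_(m' | m' != m) G X' Y' m m'.
  by rewrite -big_split; apply: eq_bigr => m _; rewrite (bigD1 m).
have offdiag_sym : \sum_m \sum_(m' | m' != m) G X Y m m' =
                   \sum_m \sum_(m' | m' != m) G Y X m m'.
  rewrite (eq_bigr (fun m => \sum_(m' | m' != m) G Y X m' m)); last first.
    by move=> m _; apply: eq_bigr => m' ne; rewrite G_offdiag.
  rewrite (exchange_big_dep xpredT) //=.
  by apply: eq_bigr => m _; apply: eq_bigl => m'; rewrite eq_sym.
rewrite !actG !split_diag offdiag_sym opprD addrACA subrr addr0 -sumrB.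
apply: eq_bigr => m _; rewrite !G_diag -sumrB; apply: eq_bigr => b' _.
by rewrite -mulrBl -sumrB.
Qed.

End TensorAction.

Section GlMatrix.

Variables (r : nat) (d : seq nat).
Implicit Types (b c : WBasis r d) (p q j : 'I_r.+1).

Lemma WBasis_eq b c : tag b = tag c -> (forall j, expo b j = expo c j) -> b = c.
Proof.
case: b c => i a [i' a'] /= ii'; subst i' => ea.
by congr (Tagged _ _); apply: val_inj; apply/ffunP => j; apply: val_inj; apply: ea.
Qed.

Lemma gl_W_neq0 p q c b : gl_W p q c b != 0 ->
  tag c = tag b /\ forall j, (expo c j + (q == j) = expo b j + (p == j))%N.
Proof.
rewrite /gl_W; case: ifP => [/andP[/eqP e /forallP h] _|]; last by rewrite eqxx.
by split => // j; apply/eqP.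
Qed.

Lemma gl_W_diag p c b : gl_W p p c b = if c == b then (expo c p)%:R else 0.
Proof.
rewrite /gl_W; case: (eqVneq c b) => [->|ne].
  by rewrite eqxx /=; case: forallP => // -[] j; rewrite eqxx.
case: ifP => // /andP[/eqP e /forallP h]; case/eqP: ne; apply: WBasis_eq => // j.
by move/eqP: (h j) => /addIn.
Qed.

Lemma gl_W_mul_offdiag p q c b b' : c != b -> gl_W p q c b' * gl_W q p b' b = 0.
Proof.
move=> ne; have [->|/gl_W_neq0 [t1 e1]] := eqVneq (gl_W p q c b') 0; first by rewrite mul0r.
have [->|/gl_W_neq0 [t2 e2]] := eqVneq (gl_W q p b' b) 0; first by rewrite mulr0.
case/eqP: ne; apply: WBasis_eq => [|j]; first by rewrite t1.
by have := e1 j; have := e2 j; lia.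
Qed.

Lemma exists_exchange p q c : (0 < expo c p)%N ->
  exists b, tag b = tag c /\ forall j, (expo b j + (p == j) = expo c j + (q == j))%N.
Proof.
case: c => i [a Ha]; rewrite /expo /= => ap_gt0.
pose F j := (a j + (q == j) - (p == j))%N.
have FE j : (F j + (p == j) = a j + (q == j))%N by rewrite subnK //; case: eqP => [<-|]; lia.
have sum_eq1 (i0 : 'I_r.+1) : (\sum_j (i0 == j) = 1)%N.
  by rewrite (bigD1 i0) //= eqxx big1 // => j /negbTE; rewrite eq_sym => ->.
have sumF : (\sum_j F j)%N = nth 0%N d i.
  apply/(@addIn 1%N) => /=; rewrite -{1}(sum_eq1 p) -(sum_eq1 q) -(eqP Ha) -!big_split /=.
  by apply: eq_bigr => j _; rewrite FE.
have F_le j : (F j < (nth 0%N d i).+1)%N by rewrite ltnS -sumF (bigD1 j) //= leq_addr.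
pose f : {ffun 'I_r.+1 -> 'I_(nth 0%N d i).+1} := [ffun j => Ordinal (F_le j)].
have Hf : (\sum_j (f j : nat))%N == nth 0%N d i.
  by apply/eqP; rewrite -[RHS]sumF; apply: eq_bigr => j _; rewrite ffunE.
exists (Tagged (fun i : 'I_(size d) => Mon r (nth 0%N d i)) (exist _ f Hf)).
by split=> // j; rewrite /= ffunE; apply: FE.
Qed.

Lemma sum_gl_W_loop p q c : p != q ->
  \sum_b gl_W p q c b * gl_W q p b c = ((expo c q).+1 * expo c p)%:R.
Proof.
move=> npq; have [cp0|cp_gt0] := posnP (expo c p).
  rewrite cp0 muln0 big1 // => b _.
  have [->|/gl_W_neq0 [_ /(_ p)]] := eqVneq (gl_W p q c b) 0; first by rewrite mul0r.
  by rewrite cp0 eqxx eq_sym (negbTE npq); lia.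
have [b' [tb' eb']] := exists_exchange q cp_gt0.
have b'_q : expo b' q = (expo c q).+1 by have := eb' q; rewrite (negbTE npq) eqxx; lia.
have G1 : gl_W p q c b' = (expo c q).+1%:R.
  by rewrite /gl_W tb' eqxx b'_q /=; case: forallP => // -[] j; rewrite eb'.
have G2 : gl_W q p b' c = (expo c p)%:R.
  by rewrite /gl_W tb' eqxx /=; case: forallP => // -[] j; rewrite eb'.
rewrite (bigD1 b') //= G1 G2 -natrM big1 ?addr0 // => b nb.
have [->|/gl_W_neq0 [tb eb]] := eqVneq (gl_W p q c b) 0; first by rewrite mul0r.
case/eqP: nb; apply: WBasis_eq => [|j]; first by rewrite -tb tb'.
by have := eb j; have := eb' j; lia.
Qed.

Lemma gl_W_commutator p q (x y : WBasis r d) : p != q ->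
  \sum_b (gl_W p q x b * gl_W q p b y - gl_W q p x b * gl_W p q b y) =
  if x == y then (expo x p)%:R - (expo x q)%:R else 0.
Proof.
move=> npq; case: (eqVneq x y) => [<-|nxy]; last first.
  by apply: big1 => b _; rewrite !gl_W_mul_offdiag // subrr.
rewrite sumrB sum_gl_W_loop // sum_gl_W_loop 1?eq_sym //.
by rewrite !mulSn [(expo x p * _)%N]mulnC !natrD opprD addrACA subrr addr0.
Qed.

End GlMatrix.

Section Weights.

Variables (r : nat) (d : seq nat) (t : nat).
Implicit Types (c : {ffun 'I_t -> WBasis r d}) (T U : tensorW r d t) (p q j : 'I_r.+1).

Definition weight c j : nat := (\sum_(m < t) expo (c m) j)%N.

Lemma gl_actE p q T c : gl_act p q T c = tensor_act (gl_W p q) T c.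
Proof. by []. Qed.

Lemma gl_act_diag p T c : gl_act p p T c = (weight c p)%:R * T c.
Proof.
rewrite /weight natr_sum -(tensor_act_diag (fun x => (expo x p)%:R)) gl_actE.
by apply: eq_tensor_act => // x y; rewrite gl_W_diag.
Qed.

Lemma gl_act_commutator p q U c : p != q ->
  gl_act p q (gl_act q p U) c - gl_act q p (gl_act p q U) c =
  ((weight c p)%:R - (weight c q)%:R) * U c.
Proof.
move=> npq; apply: etrans (tensor_act_commutator (gl_W p q) (gl_W q p) U c) _.
rewrite /weight !natr_sum -sumrB -(tensor_act_diag (fun x => (expo x p)%:R - (expo x q)%:R)).
by apply: eq_tensor_act => // x y; rewrite gl_W_commutator.
Qed.

Lemma weight_upd c m b j : (weight (upd c m b) j + expo (c m) j = weight c j + expo b j)%N.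
Proof.
rewrite /weight (bigD1 m) //= [in RHS](bigD1 m) //= upd_same addnAC [RHS]addnAC.
congr (_ + _); first exact: addnC.
by apply: eq_bigr => i ne; rewrite upd_other.
Qed.

Lemma weight_upd_gl_W p q c m b : p != q -> gl_W q p (c m) b != 0 ->
  weight (upd c m b) p = (weight c p).+1 /\ (weight (upd c m b) q).+1 = weight c q.
Proof.
move=> npq /gl_W_neq0[_ ex]; have := weight_upd c m b p; have := weight_upd c m b q.
have := ex p; have := ex q; rewrite (negbTE npq) eq_sym (negbTE npq) !eqxx /=; lia.
Qed.

End Weights.

Section HighestWeightVector.

Variables (r : nat) (d : seq nat) (t : nat) (lam : 'I_r.+1 -> nat) (T : tensorW r d t).
Hypothesis hwT : highest_weight_vector lam T.
Implicit Types (c : {ffun 'I_t -> WBasis r d}) (p q j : 'I_r.+1).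

Lemma hwv_weight c j : T c != 0 -> weight c j = lam j.
Proof.
case: hwT => _ _ diag _ nzT; have := diag j c; rewrite gl_act_diag.
by move/(mulIf nzT)/eqP; rewrite eqr_nat => /eqP.
Qed.

Lemma hwv_support_injective c : T c != 0 -> injective c.
Proof.
case: hwT => alt _ _ _ nzT m1 m2 c12; apply/eqP; apply: contraNT nzT => ne12.
have := alt c m1 m2 ne12.
have -> : [ffun m => c (tperm m1 m2 m)] = c.
  by apply/ffunP => m; rewrite ffunE; case: tpermP => // ->.
by move/eqP; rewrite -addr_eq0 -mulr2n mulrn_eq0.
Qed.

Section Dominance.

Variables p q : 'I_r.+1.
Hypothesis lt_pq : (p < q)%N.

Let npq : p != q. Proof. by rewrite neq_ltn lt_pq. Qed.

Definition lowered n := iter n (gl_act q p) T.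

Lemma lowered_weight n c : lowered n c != 0 ->
  (weight c p + n = lam p)%N /\ weight c q = (lam q + n)%N.
Proof.
elim: n c => [|n IH] c; first by move=> nzT; rewrite !addn0 !hwv_weight.
move=> /tensor_act_neq0 [m [b [/(weight_upd_gl_W npq)[wp wq] /IH[]]]].
by rewrite wp => <- wq'; rewrite wq' in wq; lia.
Qed.

(* As for sl_2, by induction from [E_pq, E_qp] = E_pp - E_qq. *)
Lemma raise_lowered n c :
  gl_act p q (lowered n.+1) c =
  n.+1%:R * ((lam p)%:R - (lam q)%:R - n%:R) * lowered n c.
Proof.
elim: n c => [|n IH] c.
  have := gl_act_commutator T c npq.
  rewrite [gl_act q p (gl_act p q T) c]tensor_act0 => [|c']; last by case: hwT => _ _ _; apply.
  rewrite subr0 mul1r subr0 => ->; rewrite /lowered /=.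
  by have [->|nzT] := eqVneq (T c) 0; rewrite ?mulr0 // !hwv_weight.
have := gl_act_commutator (lowered n.+1) c npq => /(canRL (subrK _)) ->.
rewrite gl_actE (eq_tensor_act (fun _ _ => erefl) IH) tensor_actZ.
rewrite -[tensor_act _ _ c]/(lowered n.+1 c).
have [->|nz] := eqVneq (lowered n.+1 c) 0; first by rewrite !mulr0 addr0.
have [wp wq] := lowered_weight nz.
rewrite wq -wp !natrD; move: (lowered n.+1 c) (weight c p) (lam q) => u a b.
rewrite !mulrSr; ring.
Qed.

(* The string T, E_qp T, E_qp^2 T, ... must vanish (weights are nonnegative); at
   the first vanishing step n, [raise_lowered] forces lam p - lam q = n - 1. *)
Lemma hwv_dominant : (lam q <= lam p)%N.
Proof.
have vanish : exists n, [forall c, lowered n c == 0].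
  exists (lam p).+1; apply/forallP => c; apply: contraT => /lowered_weight[]; lia.
case: (ex_minnP vanish) => -[|n] zero_n min_n.
  by case: hwT => _ [c nzT] _ _; move/forallP/(_ c): zero_n; rewrite (negbTE nzT).
have /forallPn[c nz] : ~~ [forall c, lowered n c == 0].
  by apply/negP => /min_n; rewrite ltnn.
have := raise_lowered n c; rewrite gl_actE tensor_act0 => [|c']; last exact/eqP/(forallP zero_n).
move/esym/eqP; rewrite !mulf_eq0 (negbTE nz) orbF pnatr_eq0 /= subr_eq0 => /eqP.
by move/(canRL (subrK _)); rewrite -natrD => /eqP; rewrite eqr_nat => /eqP ->; apply: leq_addl.
Qed.

End Dominance.

Lemma hwv_nonincreasing p q : (p <= q)%N -> (lam q <= lam p)%N.
Proof. by rewrite leq_eqVlt => /orP[/eqP/val_inj ->|]; [|apply: hwv_dominant]. Qed.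

Lemma hwv_support_exponent c j : T c != 0 ->
  (\sum_(b in [set c m | m in 'I_t]) expo b j)%N = lam j.
Proof.
move=> nzT; rewrite big_imset /=; last by move=> m1 m2 _ _; apply: hwv_support_injective.
exact: hwv_weight.
Qed.

End HighestWeightVector.

Local Close Scope ring_scope.

Section MonomialCounts.

Variables r D : nat.

Lemma card_Mon : #|{: Mon r D}| = 'C(D + r, r).
Proof.
rewrite card_sig addnC -card_ord_partitions -sum1dep_card -sum1_card.
pose g (s : r.+1.-tuple 'I_D.+1) : {ffun 'I_r.+1 -> 'I_D.+1} := [ffun i => tnth s i].
rewrite (reindex g) /=.
  by apply: eq_bigl => s; rewrite inE big_tuple; under eq_bigr do rewrite ffunE.
exists (fun f => [tuple f i | i < r.+1]) => [s _|f _].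
  by apply: eq_from_tnth => i; rewrite tnth_mktuple ffunE.
by apply/ffunP => i; rewrite ffunE tnth_mktuple.
Qed.

Definition swap_Mon (j : 'I_r.+1) (a : Mon r D) : Mon r D.
Proof.
exists [ffun i => val a (tperm j ord0 i)].
apply/eqP; transitivity (\sum_i (val a i : nat)); last exact/eqP/(valP a).
rewrite (reindex_inj (@perm_inj _ (tperm j ord0))) /=.
by apply: eq_bigr => i _; rewrite ffunE tpermK.
Defined.

Lemma swap_MonK j : involutive (swap_Mon j).
Proof. by move=> a; apply: val_inj; apply/ffunP => i; rewrite /= !ffunE tpermK. Qed.

(* By symmetry every variable has the same total exponent, and the r+1 totals
   add up to D #|Mon r D|. *)
Lemma sum_Mon_exponent (j : 'I_r.+1) :
  \sum_(a : Mon r D) (val a j : nat) = 'C(D + r, r.+1).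
Proof.
have sym j' : \sum_(a : Mon r D) (val a j' : nat) = \sum_(a : Mon r D) (val a ord0 : nat).
  rewrite (reindex_inj (inv_inj (swap_MonK j'))) /=.
  by apply: eq_bigr => a _; rewrite ffunE tpermL.
apply/eqP; rewrite -(eqn_pmul2l (ltn0Sn r)) mul_bin_left addnK.
have -> : r.+1 * \sum_(a : Mon r D) (val a j : nat) =
          \sum_(j' < r.+1) \sum_(a : Mon r D) (val a j' : nat).
  by rewrite sym (eq_bigr _ (fun j' _ => sym j')) sum_nat_const card_ord.
rewrite exchange_big /= (eq_bigr (fun _ => D)) => [|a _]; last exact/eqP/(valP a).
by rewrite sum_nat_const card_Mon mulnC.
Qed.

Lemma card_Mon_avoiding k : k <= r ->
  #|[set a : Mon r D | [forall j : 'I_r.+1, (j < k) ==> (val a j == 0 :> nat)]]|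
    <= 'C(D + r - k, r - k).
Proof.
move=> kr; rewrite (_ : D + r - k = (r - k) + D); last by lia.
rewrite -card_ord_partitions.
pose h (a : Mon r D) : (r - k).+1.-tuple 'I_D.+1 := [tuple val a (inord (i + k)) | i < (r - k).+1].
rewrite -(@card_in_imset _ _ h); last first.
  move=> a1 a2; rewrite !inE => /forallP h1 /forallP h2 e.
  apply: val_inj; apply/ffunP => j; apply: val_inj.
  case: (ltnP j k) => jk.
    by move: (h1 j) (h2 j); rewrite jk /= => /eqP -> /eqP ->.
  have ik : j - k < (r - k).+1 by have := ltn_ord j; lia.
  have := congr1 (fun s => tnth s (Ordinal ik)) e; rewrite /h !tnth_mktuple /=.
  by rewrite subnK // inord_val => ->.
apply: subset_leq_card; apply/subsetP => s /imsetP [a]; rewrite inE => /forallP ha ->.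
rewrite inE big_tuple; under eq_bigr do rewrite tnth_mktuple.
apply/eqP; transitivity (\sum_j (val a j : nat)); last exact/eqP/(valP a).
pose F n := (val a (inord n) : nat).
rewrite (eq_bigr (fun j : 'I_r.+1 => F j)); last by move=> j _; rewrite /F inord_val.
rewrite -(big_mkord xpredT F) (@big_cat_nat _ _ _ k) /=; [|lia|lia].
rewrite big_nat_cond [X in _ = X + _]big1 ?add0n; last first.
  move=> i /andP[/andP[_ ik] _]; have := ha (inord i); rewrite inordK ?ik /=; last by lia.
  by move/eqP.
rewrite (_ : \sum_(k <= i < r.+1) F i = \sum_(0 + k <= i < r.+1) F i) //.
rewrite big_addn subSn // big_mkord.
by apply: eq_bigr.
Qed.

End MonomialCounts.

Section BasisCounts.

Variables (r : nat) (d : seq nat).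

Lemma sum_WBasis (G : WBasis r d -> nat) :
  \sum_(b : WBasis r d) G b =
  \sum_(i < size d) \sum_(a : Mon r (nth 0 d i)) G (Tagged (fun i : 'I_(size d) => Mon r (nth 0 d i)) a).
Proof. by rewrite (sig_big_dep xpredT (fun _ _ => true)) /=; apply: eq_bigr => -[]. Qed.

Lemma sum1_WBasis : \sum_(b : WBasis r d) 1 = \sum_(di <- d) 'C(di + r, r).
Proof.
rewrite sum_WBasis (big_nth 0) big_mkord; apply: eq_bigr => i _.
by rewrite sum_nat_const muln1 card_Mon.
Qed.

Lemma sum_WBasis_exponent j : \sum_(b : WBasis r d) expo b j = \sum_(di <- d) 'C(di + r, r.+1).
Proof.
rewrite sum_WBasis (big_nth 0) big_mkord; apply: eq_bigr => i _.
exact: sum_Mon_exponent.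
Qed.

Lemma count_WBasis_avoiding k : k <= r ->
  \sum_(b : WBasis r d) ((\sum_(j < r.+1 | j < k) expo b j) == 0 : nat)
    <= \sum_(di <- d) 'C(di + r - k, r - k).
Proof.
move=> kr; rewrite sum_WBasis (big_nth 0) big_mkord; apply: leq_sum => i _.
apply: leq_trans (card_Mon_avoiding (nth 0 d i) kr).
rewrite -sum1_card [X in _ <= X]big_mkcond; apply: leq_sum => a _.
rewrite inE; case: ifP => [_|/negbT]; first exact: leq_b1.
by rewrite leqn0 eqb0 sum_nat_eq0.
Qed.

(* A basis monomial either avoids x_1, ..., x_k, or lies in S, or is counted by
   its exponents of x_1, ..., x_k outside S. *)
Lemma card_WBasis_le (S : {set WBasis r d}) k s' : k <= r ->
  (forall j : 'I_r.+1, j < k -> \sum_(b | b \notin S) expo b j <= s') ->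
  \sum_(di <- d) 'C(di + r, r) <= \sum_(di <- d) 'C(di + r - k, r - k) + #|S| + k * s'.
Proof.
move=> kr small; pose X (b : WBasis r d) := \sum_(j < r.+1 | j < k) expo b j.
have split_X : \sum_(b : WBasis r d) 1 = \sum_b ((X b == 0) : nat) + \sum_b ((0 < X b) : nat).
  by rewrite -big_split /=; apply: eq_bigr => b _; case: (X b).
have X_pos : \sum_b ((0 < X b) : nat) <= #|S| + \sum_(b | b \notin S) X b.
  rewrite -sum1_card [X in _ <= _ + X]big_mkcond [X in _ <= X + _]big_mkcond -big_split /=.
  by apply: leq_sum => b _; case: (b \in S) => /=; case: (X b).
have X_out : \sum_(b | b \notin S) X b <= k * s'.
  rewrite exchange_big /= (@leq_trans (\sum_(j < r.+1 | j < k) s')) ?leq_sum //.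
  rewrite (eq_bigl (fun j : 'I_r.+1 => xpredT (j : nat) && (j < k))) //.
  by rewrite -(big_ord_widen_cond _ xpredT _ (leqW kr)) big_const_ord iter_addn_0 mulnC.
rewrite -sum1_WBasis split_X -addnA leq_add ?count_WBasis_avoiding //.
by apply: leq_trans X_pos _; rewrite leq_add2l.
Qed.

End BasisCounts.

Lemma hwv_dim_bound r d t (lam : 'I_r.+1 -> nat) (T : tensorW r d t) k s' :
  highest_weight_vector lam T -> 1 <= k <= r ->
  \sum_(di <- d) 'C(di + r, r.+1) <= lam (inord k.-1) + s' ->
  \sum_(di <- d) 'C(di + r, r) <= \sum_(di <- d) 'C(di + r - k, r - k) + t + k * s'.
Proof.
move=> hwT /andP[k_gt0 k_le_r] big_lam.
have [c0 nzT] : exists c, T c != 0%R by case: hwT.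
have card_supp : #|[set c0 m | m in 'I_t]| = t.
  by rewrite (card_imset _ (hwv_support_injective hwT nzT)) card_ord.
rewrite -[in X in _ <= _ + X + _]card_supp; apply: card_WBasis_le => // j jk.
have lam_j : lam (inord k.-1) <= lam j.
  by apply: (hwv_nonincreasing hwT); rewrite inordK; lia.
have := sum_WBasis_exponent d j; rewrite (bigID (mem [set c0 m | m in 'I_t])) /=.
rewrite (hwv_support_exponent hwT _ nzT) -(leq_add2l (lam j)) => ->; lia.
Qed.

Theorem lemma2p2 (r : nat) (d : seq nat) (s' k t : nat) :
  all (fun di => 2 <= di) d ->
  1 <= k <= r ->
  0 < t ->
  (t%:Z < ((\sum_(di <- d) 'C(di + r, r))%:Z - (\sum_(di <- d) 'C(di + r - k, r - k))%:Z)
            - (k * s')%:Z)%R ->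
  forall lam : 'I_r.+1 -> nat, @is_summand_wedge r d t lam ->
  ((lam (inord k.-1))%:Z < (\sum_(di <- d) 'C(di + r, r.+1))%:Z - s'%:Z)%R.
Proof.
move=> _ hk _ ht lam [T hwT].
have [|big_lam] := ltnP (lam (inord k.-1) + s') (\sum_(di <- d) 'C(di + r, r.+1)).
  by move=> small_lam; lia.
by have := hwv_dim_bound hwT hk big_lam; lia.
Qed.
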